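(* Let $n\in\mathbb{N}$, let $p$ be a prime and let $d,k,m\in\mathbb{N}$. Consider the system of equations \[ F_1(x_1,\ldots,x_m)=\cdots=F_k(x_1,\ldots,x_m)=0, \] where each $F_i$ is a homogeneous polynomial of degree $d$ with coefficients in $\mathbb{Z}/p^n\mathbb{Z}$. For every non-negative integer $h$ (and every $n'$), let $S(n',h)$ denote the set of solutions $(x_1,\ldots,x_m)\in(\mathbb{Z}/p^{n'}\mathbb{Z})^m$ of the system (with coefficients reduced modulo $p^{n'}$) satisfying $\min\{\nu_p(x_1),\ldots,\nu_p(x_m)\}=h$. If $0\le h<n/d$, then \[ |S(n,h)| = p^{(d-1)hm}\,|S(n-dh,0)|. \]
   Context: For a prime $p$ and $n\in\mathbb{N}$, the $p$-adic valuation $\nu_p:\mathbb{Z}/p^n\mathbb{Z}\to\{0,1,\ldots,n\}$ is defined by $\nu_p(y+p^n\mathbb{Z})=\nu_p(y)$ (the largest $j\ge 0$ with $p^j\mid y$) if $p^n\nmid y$, and $\nu_p(y+p^n\mathbb{Z})=n$ if $p^n\mid y$. *)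

From mathcomp Require Import all_boot all_algebra.
From mathcomp Require Import mpoly.
Set Implicit Arguments. Unset Strict Implicit. Unset Printing Implicit Defensive.
Import GRing.Theory.
Local Open Scope ring_scope.

(* p-adic valuation on Z/p^n Z, elements represented by their canonical
   representatives 0 <= y < p^n : nu_p(y) = n if y = 0, else the largest j
   with p^j | y (= logn p y). *)
Definition vpZ (p n : nat) (y : 'I_(p ^ n)) : nat :=
  if val y == 0%N then n else logn p (val y).

(* Minimum of the valuations of the coordinates of x in (Z/p^n Z)^m
   (for m = 0 the empty minimum is taken to be n, the valuation of 0). *)
Definition minval (p n m : nat) (x : {ffun 'I_m -> 'I_(p ^ n)}) : nat :=
  \big[minn/n]_(j < m) vpZ (x j).

(* S(n', h): solutions x in (Z/p^{n'} Z)^m of F_1 = ... = F_k = 0, where the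
   F_i (given by integer lifts of their coefficients) are reduced mod p^{n'},
   with min_j nu_p(x_j) = h. *)
Definition solset (p n' m k : nat) (F : 'I_k -> {mpoly int[m]}) (h : nat)
  : {set {ffun 'I_m -> 'I_(p ^ n')}} :=
  [set x : {ffun 'I_m -> 'I_(p ^ n')} | [forall i, ((p ^ n')%:Z %| (F i).@[fun j => ((x j : nat))%:Z])%Z]
           && (minval x == h)].

(* A vector x over Z/p^n with min_j nu_p(x_j) = h is p^h (y + p^(n-dh) t) for
   unique y mod p^(n-dh) and t mod p^((d-1)h).  By homogeneity
   F(x) = p^(dh) F(y + p^(n-dh) t), and F(y + p^(n-dh) t) = F(y) mod p^(n-dh),
   so x solves the system mod p^n iff y solves it mod p^(n-dh); moreover
   min_j nu_p(x_j) = h iff some y_j is prime to p.  Hence (y, t) |-> x is a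
   bijection from S(n-dh, 0) x (Z/p^((d-1)h))^m onto S(n, h). *)

From mathcomp Require Import all_boot all_algebra.
From mathcomp Require Import mpoly.
From mathcomp Require Import all_order zify.
Set Implicit Arguments. Unset Strict Implicit. Unset Printing Implicit Defensive.
Import Order.TTheory GRing.Theory Num.Theory.
Local Open Scope ring_scope.

Lemma meval_dhomog_scale (R : comNzRingType) m (P : {mpoly R[m]}) d (c : R) (v : 'I_m -> R) :
  P \is d.-homog -> P.@[fun j => c * v j] = c ^+ d * P.@[v].
Proof.
move=> /dhomogP hP; rewrite !mevalE big_distrr /=.
apply: eq_big_seq => mu /hP hmu.
under eq_bigr do rewrite exprMn.
by rewrite big_split /= prodrXr -mdegE hmu mulrCA.
Qed.

Lemma dvdz_meval_sub m (P : {mpoly int[m]}) (N : int) (a b : 'I_m -> int) :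
  (forall j, (N %| a j - b j)%Z) -> (N %| P.@[a] - P.@[b])%Z.
Proof.
pose cong x y := (N %| x - y)%Z.
have cong_refl x : cong x x by rewrite /cong subrr dvdz0.
have congD x1 x2 y1 y2 : cong x1 x2 -> cong y1 y2 -> cong (x1 + y1) (x2 + y2).
  by move=> c1 c2; rewrite /cong opprD addrACA; apply: rpredD.
have congM x1 x2 y1 y2 : cong x1 x2 -> cong y1 y2 -> cong (x1 * y1) (x2 * y2).
  move=> c1 c2; rewrite /cong -(subrK (x1 * y2) (x1 * y1)) -addrA -mulrBr -mulrBl.
  by apply: rpredD; [apply: dvdz_mull | apply: dvdz_mulr].
rewrite !mevalE => cong_ab; apply: (big_ind2 cong) => // mu _.
apply/congM/(big_ind2 cong) => // j _.
by elim: (mu j) => [|e IH]; rewrite ?expr0 // !exprS; exact: congM (cong_ab j) IH.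
Qed.

Lemma dvdz_meval_homog_shift m (P : {mpoly int[m]}) d (c M : int) (a t : 'I_m -> int) :
  P \is d.-homog -> c != 0 ->
  (c ^+ d * M %| P.@[fun j => c * (a j + M * t j)])%Z = (M %| P.@[a])%Z.
Proof.
move=> homP c0; rewrite (@meval_dhomog_scale _ _ _ d) // dvdz_mul2l ?expf_neq0 //.
have /dvdz_meval_sub cong : forall j, (M %| (a j + M * t j) - a j)%Z.
  by move=> j; rewrite addrAC subrr add0r dvdz_mulr.
by rewrite -(subrK P.@[a] P.@[_]) rpredDl.
Qed.

Lemma leq_vpZ p n (y : 'I_(p ^ n)) h : prime p -> (h <= n)%N ->
  (h <= vpZ y)%N = (p ^ h %| y)%N.
Proof.
move=> p_pr le_hn; rewrite /vpZ; case: eqP => [->|/eqP y_neq0]; first by rewrite dvdn0.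
by rewrite pfactor_dvdn // lt0n.
Qed.

Lemma leq_minval p n m (x : {ffun 'I_m -> 'I_(p ^ n)}) h : prime p -> (h <= n)%N ->
  (h <= minval x)%N = [forall j, p ^ h %| x j]%N.
Proof.
move=> p_pr le_hn; rewrite /minval; apply/idP/forallP => [le_h_min j | dvd_x].
  by rewrite -leq_vpZ //; apply: leq_trans le_h_min _; exact: (@bigmin_le _ nat _ n j).
by elim/big_ind: _ => // [u v le_hu le_hv | j _]; rewrite ?leq_min ?le_hu // leq_vpZ ?dvd_x.
Qed.

Lemma minval_eqE p n m (x : {ffun 'I_m -> 'I_(p ^ n)}) h : prime p -> (h < n)%N ->
  (minval x == h) = [forall j, p ^ h %| x j]%N && ~~ [forall j, p ^ h.+1 %| x j]%N.
Proof. by move=> p_pr lt_hn; rewrite eqn_leq leqNgt andbC !leq_minval // ltnW. Qed.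

Section ScaledDigits.

Variables (a M T N : nat).
Hypotheses (a_gt0 : (0 < a)%N) (aMT_N : (a * (M * T))%N = N).

Lemma scaled_digits_subproof (y : 'I_M) (t : 'I_T) : (a * (y + M * t) < N)%N.
Proof.
rewrite -aMT_N ltn_pmul2l // (@leq_trans (M * t.+1)) //.
  by rewrite mulnS ltn_add2r.
by rewrite leq_mul2l ltn_ord orbT.
Qed.

Definition scaled_digits (y : 'I_M) (t : 'I_T) : 'I_N :=
  Ordinal (scaled_digits_subproof y t).

Lemma scaled_digits_inj y t y' t' :
  scaled_digits y t = scaled_digits y' t' -> y = y' /\ t = t'.
Proof.
move=> /(congr1 val) /eqP /=; rewrite eqn_pmul2l // => /eqP eq_yt.
have M_gt0 : (0 < M)%N by apply: leq_ltn_trans (ltn_ord y).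
split; apply: val_inj.
  have := congr1 (modn^~ M) eq_yt.
  by rewrite /= !(addnC (nat_of_ord _)) !(mulnC M) !modnMDl !modn_small.
have := congr1 (divn^~ M) eq_yt.
by rewrite /= !(mulnC M) !divnDMl // !divn_small.
Qed.

Lemma scaled_digitsP (x : 'I_N) : (a %| x)%N -> exists y t, x = scaled_digits y t.
Proof.
move=> dvd_ax.
have : (0 < a * (M * T))%N by rewrite aMT_N (leq_ltn_trans _ (ltn_ord x)).
rewrite !muln_gt0 => /and3P[_ M_gt0 _].
have lt_lo : (x %/ a %% M < M)%N by rewrite ltn_pmod.
have lt_hi : (x %/ a %/ M < T)%N.
  by rewrite !ltn_divLR // mulnC (mulnC T) aMT_N.
exists (Ordinal lt_lo), (Ordinal lt_hi); apply: val_inj => /=.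
by rewrite addnC (mulnC M) -divn_eq mulnC divnK.
Qed.

Variable I : finType.

Definition scaled_digits_ffun (u : {ffun I -> 'I_M} * {ffun I -> 'I_T}) : {ffun I -> 'I_N} :=
  [ffun j => scaled_digits (u.1 j) (u.2 j)].

Lemma scaled_digits_ffun_inj : injective scaled_digits_ffun.
Proof.
move=> [y t] [y' t'] /ffunP eq_u.
have eq_j j : y j = y' j /\ t j = t' j.
  by apply: scaled_digits_inj; have := eq_u j; rewrite !ffunE.
by congr pair; apply/ffunP => j; case: (eq_j j).
Qed.

Lemma scaled_digits_ffunP (x : {ffun I -> 'I_N}) :
  (forall j, a %| x j)%N -> exists u, x = scaled_digits_ffun u.
Proof.
move=> dvd_ax.
have /fin_all_exists [u x_u] j : exists u : 'I_M * 'I_T, x j = scaled_digits u.1 u.2.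
  by have [y [t ->]] := scaled_digitsP (dvd_ax j); exists (y, t).
by exists ([ffun j => (u j).1], [ffun j => (u j).2]); apply/ffunP => j; rewrite !ffunE x_u.
Qed.

End ScaledDigits.

Section Solset.

Variables (p n d h m k : nat) (F : 'I_k -> {mpoly int[m]}).
Hypotheses (p_pr : prime p) (homF : forall i, F i \is d.-homog).
Hypotheses (d_gt0 : (0 < d)%N) (dh_lt_n : (d * h < n)%N).

Let ph_gt0 : (0 < p ^ h)%N. Proof. by rewrite expn_gt0 prime_gt0. Qed.

Let expn_split : (p ^ h * (p ^ (n - d * h) * p ^ ((d - 1) * h)))%N = (p ^ n)%N.
Proof.
have le_h_dh := leq_pmull h d_gt0.
by rewrite -!expnD mulnBl mul1n; congr (p ^ _)%N; lia.
Qed.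

Local Notation lift := (@scaled_digits_ffun _ _ _ _ ph_gt0 expn_split 'I_m).

Lemma val_lift y t j :
  val (lift (y, t) j) = (p ^ h * (y j + p ^ (n - d * h) * t j))%N.
Proof. by rewrite ffunE. Qed.

Lemma dvdz_meval_lift y t i :
  ((p ^ n)%:Z %| (F i).@[fun j => (lift (y, t) j : nat)%:Z])%Z =
  ((p ^ (n - d * h))%:Z %| (F i).@[fun j => (y j : nat)%:Z])%Z.
Proof.
have pn_split : (p ^ n)%:Z = (p ^ h)%:Z ^+ d * (p ^ (n - d * h))%:Z.
  by rewrite -!natz -natrX -natrM -expnM -expnD mulnC subnKC // ltnW.
have lift_int j : (lift (y, t) j : nat)%:Z =
    (p ^ h)%:Z * ((y j : nat)%:Z + (p ^ (n - d * h))%:Z * (t j : nat)%:Z).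
  by rewrite val_lift.
rewrite (meval_eq _ lift_int) pn_split dvdz_meval_homog_shift //.
by rewrite lt0r_neq0 // ltz_nat.
Qed.

Lemma minval_lift y t : (minval (lift (y, t)) == h) = (minval y == 0%N).
Proof.
have n'_gt0 : (0 < n - d * h)%N by rewrite subn_gt0.
rewrite !minval_eqE // ?(leq_ltn_trans (leq_pmull h d_gt0)) //.
have -> : [forall j, p ^ h %| lift (y, t) j]%N.
  by apply/forallP => j; rewrite val_lift dvdn_mulr.
have -> : [forall j, p ^ 0 %| y j]%N by apply/forallP => j; rewrite dvd1n.
congr (_ && ~~ _); apply: eq_forallb => j.
rewrite val_lift expnSr dvdn_pmul2l // expn1 dvdn_addl //.
by rewrite dvdn_mulr // dvdn_exp.
Qed.

Lemma mem_solset_lift y t :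
  (lift (y, t) \in solset p n F h) = (y \in solset p (n - d * h) F 0).
Proof.
by rewrite !inE minval_lift; congr andb; apply: eq_forallb => i; rewrite dvdz_meval_lift.
Qed.

Lemma solset_lift : solset p n F h = lift @: setX (solset p (n - d * h) F 0) setT.
Proof.
apply/setP => x; apply/idP/imsetP => [x_sol | [[y t] /setXP[y_sol _] ->]].
  have [[y t] x_lift] : exists u, x = lift u.
    apply: scaled_digits_ffunP => j.
    move: x_sol; rewrite inE minval_eqE ?(leq_ltn_trans (leq_pmull h d_gt0)) //.
    by case/and3P => _ /forallP.
  by exists (y, t); rewrite // in_setX in_setT andbT -(mem_solset_lift y t) -x_lift.
by rewrite mem_solset_lift.
Qed.

End Solset.

Theorem lemma5p1 (n p d k m : nat) (F : 'I_k -> {mpoly int[m]}) (h : nat) :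
  prime p ->
  (forall i, F i \is d.-homog) ->
  (0 < d)%N ->
  (d * h < n)%N ->
  #|solset p n F h| = (p ^ ((d - 1) * h * m) * #|solset p (n - d * h) F 0|)%N.
Proof.
move=> p_pr homF d_gt0 dh_lt_n.
rewrite (solset_lift p_pr homF d_gt0 dh_lt_n) card_imset; last exact: scaled_digits_ffun_inj.
by rewrite cardsX cardsT card_ffun !card_ord -expnM mulnC.
Qed.
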